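(* Let $H\in\mathbb{R}^{n\times d}$, $\Sigma\in\mathbb{R}^{n\times n}$ symmetric positive definite, $y\in\mathbb{R}^n$, $J\ge2$, and let $v_i^{(j)}$ be deterministic EKI iterates $$v_{i+1}^{(j)}=v_i^{(j)}+\Gamma_iH^\top(H\Gamma_iH^\top+\Sigma)^{-1}(y-Hv_i^{(j)}),$$ with $\Gamma_i$ the empirical ensemble covariance. Let $v^*=(H^\top\Sigma^{-1}H)^\dagger H^\top\Sigma^{-1}y$ and $\omega_i^{(j)}=v_i^{(j)}-v^*$. Then for all $i\ge0$, $\omega_{i+1}^{(j)}=\mathbb{M}_i\omega_i^{(j)}$ with $\mathbb{M}_i=(I+\Gamma_iH^\top\Sigma^{-1}H)^{-1}$.
   Context: Empirical covariance $\Gamma_i=\frac1{J-1}\sum_j(v_i^{(j)}-\bar v_i)(v_i^{(j)}-\bar v_i)^\top$, $\bar v_i=\frac1J\sum_jv_i^{(j)}$; $\dagger$ denotes the Moore–Penrose pseudoinverse. *)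

From HB Require Import structures.
From mathcomp Require Import all_boot all_order all_algebra.
Set Implicit Arguments. Unset Strict Implicit. Unset Printing Implicit Defensive.
Import Order.TTheory GRing.Theory Num.Theory.
Local Open Scope ring_scope.

Definition moore_penrose (R : realFieldType) (m n : nat)
    (A : 'M[R]_(m, n)) (X : 'M[R]_(n, m)) : Prop :=
  [/\ A *m X *m A = A, X *m A *m X = X,
      (A *m X)^T = A *m X & (X *m A)^T = X *m A].

Definition spd (R : realFieldType) (n : nat) (S : 'M[R]_n) : Prop :=
  S^T = S /\ forall x : 'cV[R]_n, x != 0 -> 0 < (x^T *m S *m x) 0 0.

Definition ens_mean (R : realFieldType) (d J : nat) (v : 'I_J -> 'cV[R]_d)
  : 'cV[R]_d := (J%:R)^-1 *: \sum_(j < J) v j.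

Definition emp_cov (R : realFieldType) (d J : nat) (v : 'I_J -> 'cV[R]_d)
  : 'M[R]_d :=
  ((J.-1)%:R)^-1 *: \sum_(j < J) ((v j - ens_mean v) *m (v j - ens_mean v)^T).

(* Put Gamma := emp_cov (v i), B := Gamma H^T, G := H Gamma H^T + Sigma and
   K := I + B Sigma^-1 H.  Since H B = G - Sigma, the push-through identity
   K B G^-1 = B Sigma^-1 holds, and it also gives K (I - B G^-1 H) = I, so K is
   invertible.  Multiplying the EKI update by K then yields
   K (v_(i+1) - vstar) = v_i - vstar, provided B Sigma^-1 H vstar =
   B Sigma^-1 y.  The latter follows from A P H^T Sigma^-1 = H^T Sigma^-1 for
   A := H^T Sigma^-1 H and its pseudoinverse P: the matrix
   M := (I - A P) H^T Sigma^-1 satisfies M Sigma M^T = (I - A P) A (I - A P) = 0,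
   hence M = 0 as Sigma is positive definite. *)
From HB Require Import structures.
From mathcomp Require Import all_boot all_order all_algebra.
Import Order.TTheory GRing.Theory Num.Theory.
Local Open Scope ring_scope.
Set Implicit Arguments. Unset Strict Implicit.

Section QuadraticForms.
Variable R : realFieldType.

Definition posdef_form (n : nat) (S : 'M[R]_n) :=
  forall x : 'cV[R]_n, x != 0 -> 0 < (x^T *m S *m x) 0 0.

Definition psd_form (n : nat) (S : 'M[R]_n) :=
  forall x : 'cV[R]_n, 0 <= (x^T *m S *m x) 0 0.

Lemma posdef_unitmx (n : nat) (S : 'M[R]_n) : posdef_form S -> S \in unitmx.
Proof.
move=> S_pd; rewrite unitmxE unitfE; apply/negP => /det0P [r r_neq0 rS0].
have := S_pd r^T; rewrite trmx_eq0 r_neq0 trmxK rS0 mul0mx mxE ltxx.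
by move/(_ isT).
Qed.

Lemma posdefD_psd (n : nat) (S T : 'M[R]_n) :
  psd_form T -> posdef_form S -> posdef_form (T + S).
Proof.
move=> T_psd S_pd x x_neq0.
by rewrite mulmxDr mulmxDl mxE ltr_wpDl ?T_psd ?S_pd.
Qed.

Lemma psd_conj (n m : nat) (T : 'M[R]_m) (H : 'M[R]_(n, m)) :
  psd_form T -> psd_form (H *m T *m H^T).
Proof.
move=> T_psd x.
by have := T_psd (H^T *m x); rewrite trmx_mul trmxK !mulmxA.
Qed.

Lemma psd_emp_cov (n J : nat) (u : 'I_J -> 'cV[R]_n) : psd_form (emp_cov u).
Proof.
move=> w; rewrite /emp_cov -scalemxAr -scalemxAl mxE mulr_ge0 ?invr_ge0 //.
rewrite mulmx_sumr mulmx_suml summxE sumr_ge0 // => j _.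
set a := w^T *m (u j - ens_mean u).
have -> : w^T *m ((u j - ens_mean u) *m (u j - ens_mean u)^T) *m w = a *m a^T.
  by rewrite /a trmx_mul trmxK !mulmxA.
by clearbody a; rewrite mxE big_ord1 mxE -expr2 sqr_ge0.
Qed.

Lemma posdef_mx_eq0 (n m : nat) (S : 'M[R]_n) (M : 'M[R]_(m, n)) :
  posdef_form S -> M *m S *m M^T = 0 -> M = 0.
Proof.
move=> S_pd MSM0; apply/row_matrixP => k; rewrite row0.
apply/eqP/negPn/negP => rk_neq0.
have := S_pd (row k M)^T; rewrite trmx_eq0 rk_neq0 trmxK => /(_ isT).
suff -> : (row k M *m S *m (row k M)^T) 0 0 = (M *m S *m M^T) k k.
  by rewrite MSM0 mxE ltxx.
by rewrite tr_row -row_mul !mxE; apply: eq_bigr => l _; rewrite !mxE.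
Qed.

End QuadraticForms.

Section WeightedLeastSquares.
Variables (R : realFieldType) (n d : nat).
Variables (H : 'M[R]_(n, d)) (S : 'M[R]_n) (P : 'M[R]_d).
Hypotheses (S_spd : spd S) (P_pinv : moore_penrose (H^T *m invmx S *m H) P).

Lemma weighted_gram_pinv_range :
  H^T *m invmx S *m H *m P *m (H^T *m invmx S) = H^T *m invmx S.
Proof.
case: S_spd => ST S_pd; case: P_pinv => AP_A _ AP_sym _.
have S_unit := posdef_unitmx S_pd.
set A := H^T *m invmx S *m H; set Q := 1%:M - A *m P.
have QA0 : Q *m A = 0 by rewrite mulmxBl mul1mx AP_A subrr.
have QT : Q^T = Q by rewrite linearB /= trmx1 AP_sym.
have SiT : (invmx S)^T = invmx S by rewrite trmx_inv ST.
suff M0 : Q *m (H^T *m invmx S) = 0.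
  by apply/eqP; rewrite eq_sym -subr_eq0 -M0 mulmxBl mul1mx.
apply: (posdef_mx_eq0 S_pd).
rewrite !trmx_mul trmxK SiT QT -!mulmxA (mulmxA (invmx S) S) mulVmx //.
by rewrite mul1mx !mulmxA -(mulmxA Q) -(mulmxA Q) QA0 mul0mx.
Qed.

Lemma weighted_lsq_normal_eq (m : nat) (B : 'M[R]_(m, d)) (y : 'cV[R]_n) :
  B *m H^T *m invmx S *m H *m (P *m H^T *m invmx S *m y) =
  B *m H^T *m invmx S *m y.
Proof.
have := congr1 (fun X => B *m X *m y) weighted_gram_pinv_range.
by rewrite /= !mulmxA.
Qed.

End WeightedLeastSquares.

Section PushThrough.
Variables (R : realFieldType) (n d : nat).
Variables (B : 'M[R]_(d, n)) (H : 'M[R]_(n, d)) (S G : 'M[R]_n).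
Hypotheses (S_unit : S \in unitmx) (G_unit : G \in unitmx) (HB : H *m B = G - S).

Lemma push_through :
  (1%:M + B *m invmx S *m H) *m (B *m invmx G) = B *m invmx S.
Proof.
rewrite mulmxDl mul1mx -!mulmxA (mulmxA H) HB mulmxBl mulmxV //.
by rewrite mulmxBr mulmx1 mulmxA mulVmx // mul1mx mulmxBr addrC subrK.
Qed.

Lemma push_through_unitmx : (1%:M + B *m invmx S *m H) \in unitmx.
Proof.
suff : (1%:M + B *m invmx S *m H) *m (1%:M - B *m invmx G *m H) = 1%:M.
  by case/mulmx1_unit.
by rewrite mulmxBr mulmx1 (mulmxA _ (B *m _)) push_through addrK.
Qed.

Lemma push_through_update_error (v vstar : 'cV[R]_d) (y : 'cV[R]_n) :
  B *m invmx S *m H *m vstar = B *m invmx S *m y ->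
  (1%:M + B *m invmx S *m H) *m (v + B *m invmx G *m (y - H *m v) - vstar) =
  v - vstar.
Proof.
move=> normal_eq.
rewrite mulmxBr mulmxDr (mulmxA (1%:M + _)) push_through.
rewrite !mulmxDl !mul1mx normal_eq mulmxBr !mulmxA.
by rewrite addrACA subrr addr0 opprD addrACA subrr addr0.
Qed.

End PushThrough.

Unset Implicit Arguments.

Theorem proposition3p12 (R : realFieldType) (n d J : nat)
  (H : 'M[R]_(n, d)) (Sigma : 'M[R]_n) (y : 'cV[R]_n)
  (v : nat -> 'I_J -> 'cV[R]_d)
  (P : 'M[R]_d) (vstar : 'cV[R]_d) :
  spd Sigma ->
  (2 <= J)%N ->
  (forall i (j : 'I_J),
     v i.+1 j = v i j + emp_cov (v i) *m H^T
                  *m invmx (H *m emp_cov (v i) *m H^T + Sigma)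
                  *m (y - H *m v i j)) ->
  moore_penrose (H^T *m invmx Sigma *m H) P ->
  vstar = P *m H^T *m invmx Sigma *m y ->
  forall i (j : 'I_J),
    (1%:M + emp_cov (v i) *m H^T *m invmx Sigma *m H) \in unitmx /\
    v i.+1 j - vstar =
      invmx (1%:M + emp_cov (v i) *m H^T *m invmx Sigma *m H)
        *m (v i j - vstar).
Proof.
move=> Sigma_spd _ v_step P_pinv -> i j.
set B := emp_cov (v i) *m H^T.
have [_ Sigma_pd] := Sigma_spd.
have G_unit : H *m emp_cov (v i) *m H^T + Sigma \in unitmx.
  exact/posdef_unitmx/posdefD_psd/Sigma_pd/psd_conj/psd_emp_cov.
have HB : H *m B = H *m emp_cov (v i) *m H^T + Sigma - Sigma.
  by rewrite mulmxA addrK.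
have Sigma_unit := posdef_unitmx Sigma_pd.
have K_unit := push_through_unitmx Sigma_unit G_unit HB.
split=> //; rewrite -[LHS](mulKmx K_unit) v_step -/B.
congr (_ *m _); apply: (push_through_update_error Sigma_unit G_unit HB).
exact: weighted_lsq_normal_eq.
Qed.
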